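(* Let $G=(V,E)$ be a finite connected directed graph with $(i,j)\in E$ if and only if $(j,i)\in E$, and write $\partial i=\{j\in V:(j,i)\in E\}$. Let $f=(f_{ij})_{(i,j)\in E}$ with each $f_{ij}:\mathbb{R}\to\mathbb{R}$ continuous and strictly increasing and $f_{ij}(x)=-f_{ji}(-x)$. Let $(\phi,\pi)$ and $(\phi^*,\pi^* )$, with $\phi,\phi^*:E\to\mathbb{R}$ skew-symmetric and $\pi,\pi^*:V\to\mathbb{R}$, satisfy $\sum_{j\in\partial i}\phi_{ji}+q_i=0$, $\sum_{j\in\partial i}\phi^*_{ji}+q^*_i=0$ for all $i\in V$, and $\pi_j-\pi_i=-f_{ij}(\phi_{ij})$, $\pi^*_j-\pi^*_i=-f_{ij}(\phi^*_{ij})$ for all $(i,j)\in E$, for productions $q,q^*:V\to\mathbb{R}$. Let $T\subset V$. If $\pi_t=\pi_t^*$ for all $t\in T$ and $q_i\ge q_i^*$ for all $i\in V\setminus T$, then $q_t\le q_t^*$ for all $t\in T$. *)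

From HB Require Import structures.
From mathcomp Require Import all_boot all_order all_algebra.
From mathcomp Require Import all_classical all_reals all_analysis.
Set Implicit Arguments. Unset Strict Implicit. Unset Printing Implicit Defensive.
Import Order.TTheory GRing.Theory Num.Theory.
Import numFieldNormedType.Exports.
Local Open Scope ring_scope.

Definition network_solution (R : realType) (V : finType) (E : rel V)
    (f : V -> V -> R -> R) (q : V -> R) (phi : V -> V -> R) (pi : V -> R) : Prop :=
  [/\ (forall i j, E i j -> phi i j = - phi j i),
      (forall i, \sum_(j | E j i) phi j i + q i = 0)
    & (forall i j, E i j -> pi j - pi i = - f i j (phi i j))].

(* Let d = pi - pi* and let g = phi - phi* be the difference of the flows.
   Strict monotonicity of f makes g flow along the gradient of d: g_ij <= 0
   whenever d_i <= d_j, strictly if (i, j) is an edge and d_i < d_j.  If d had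
   a negative minimum, its minimum level set S would avoid T, where d = 0, so
   q >= q* on S; by flow conservation the net outflow of g from S is then
   >= 0, yet every edge leaving S carries a nonpositive flow, and some such
   edge (one exists since the graph is connected and S <> V) a negative one.
   Hence d >= 0 is minimal at every t in T, all flow differences out of t are
   nonpositive, and q_t - q*_t = sum_j g_tj <= 0. *)
From HB Require Import structures.
From mathcomp Require Import all_boot all_order all_algebra.
From mathcomp Require Import all_classical all_reals all_analysis.
From mathcomp Require Import lra.
Import Order.TTheory GRing.Theory Num.Theory.
Import numFieldNormedType.Exports.
Local Open Scope ring_scope.

Set Implicit Arguments.
Unset Strict Implicit.
Unset Printing Implicit Defensive.

Lemma connect_crossing_edge (V : finType) (E : rel V) (S : pred V) x y :
  connect E x y -> S x -> ~~ S y -> exists a b, [/\ S a, ~~ S b & E a b].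
Proof.
move=> /connectP [p Ep ->]; elim: p x Ep => [|z p IHp] x /=.
  by move=> _ ->.
move=> /andP [Exz Ep] Sx Sl.
case Sz: (S z); first exact: IHp Ep Sz Sl.
by exists x, z; rewrite Sz.
Qed.

Lemma sumr_lt0_witness (R : numDomainType) (I : finType) (P : pred I)
    (F : I -> R) a :
  (forall i, P i -> F i <= 0) -> P a -> F a < 0 -> \sum_(i | P i) F i < 0.
Proof.
move=> F_le0 Pa Fa_lt0; rewrite (bigD1 a) //= -[ltRHS]addr0.
by apply: ltr_leD => //; apply: sumr_le0 => i /andP [Pi _]; exact: F_le0.
Qed.

Section AntisymmetricSums.

Variables (R : numDomainType) (V : finType) (G : V -> V -> R).
Hypothesis G_antisym : forall i j, G i j = - G j i.

Lemma antisym_sum_within (S : pred V) :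
  \sum_(i | S i) \sum_(j | S j) G i j = 0.
Proof.
set X := (X in X = 0).
have X_opp : X = - X.
  rewrite {1}/X exchange_big /= -sumrN; apply: eq_bigr => i _.
  by rewrite -sumrN; apply: eq_bigr => j _; rewrite G_antisym.
have : X *+ 2 == 0 by rewrite mulr2n {1}X_opp addNr.
by rewrite mulrn_eq0 => /eqP.
Qed.

Lemma antisym_outflow (S : pred V) :
  \sum_(i | S i) \sum_j G i j = \sum_(i | S i) \sum_(j | ~~ S j) G i j.
Proof.
under eq_bigr => i _ do rewrite (bigID S) /=.
by rewrite big_split /= antisym_sum_within add0r.
Qed.

End AntisymmetricSums.

Section NetworkComparison.

Variables (R : realType) (V : finType) (E : rel V) (f : V -> V -> R -> R).
Variables (q qs : V -> R) (phi phis : V -> V -> R) (pi pis : V -> R).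
Hypothesis E_sym : forall i j, E i j = E j i.
Hypothesis f_incr :
  forall i j, E i j -> forall x y : R, x < y -> f i j x < f i j y.
Hypothesis sol : network_solution E f q phi pi.
Hypothesis sols : network_solution E f qs phis pis.

Definition potential_gap i := pi i - pis i.

Definition flow_gap i j := if E i j then phi i j - phis i j else 0.

Lemma flow_gap_antisym i j : flow_gap i j = - flow_gap j i.
Proof.
case: sol sols => [sk _ _] [sks _ _].
rewrite /flow_gap E_sym; case: ifP => Eji; last by rewrite oppr0.
have Eij : E i j by rewrite E_sym.
by rewrite (sk _ _ Eij) (sks _ _ Eij) opprD.
Qed.

Lemma production_of_flow (p : V -> R) (psi : V -> V -> R) (rho : V -> R) i :
  network_solution E f p psi rho -> p i = \sum_(j | E i j) psi i j.
Proof.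
case=> sk cons _.
have -> : \sum_(j | E i j) psi i j = - \sum_(j | E j i) psi j i.
  by rewrite -sumrN; apply: eq_big => [j|j Eij]; [exact: E_sym | rewrite sk].
by apply/eqP; rewrite -addr_eq0 addrC cons.
Qed.

Lemma production_gap i : q i - qs i = \sum_j flow_gap i j.
Proof.
rewrite (production_of_flow i sol) (production_of_flow i sols) -sumrB.
by rewrite big_mkcond.
Qed.

Lemma f_flow_potential (p : V -> R) (psi : V -> V -> R) (rho : V -> R) i j :
  network_solution E f p psi rho -> E i j -> f i j (psi i j) = rho i - rho j.
Proof. by case=> _ _ pot Eij; rewrite -[LHS]opprK -pot // opprB. Qed.

Lemma f_mono i j : E i j -> {mono f i j : x y / x <= y}.
Proof. by move=> Eij; apply: le_mono; exact: f_incr. Qed.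

Lemma flow_gap_le0 i j :
  potential_gap i <= potential_gap j -> flow_gap i j <= 0.
Proof.
rewrite /flow_gap; case: ifP => // Eij gap_le.
rewrite subr_le0 -(f_mono Eij).
rewrite (f_flow_potential sol Eij) (f_flow_potential sols Eij).
by move: gap_le; rewrite /potential_gap; lra.
Qed.

Lemma flow_gap_lt0 i j :
  E i j -> potential_gap i < potential_gap j -> flow_gap i j < 0.
Proof.
move=> Eij gap_lt; rewrite /flow_gap Eij subr_lt0.
rewrite -(leW_mono (f_mono Eij)).
rewrite (f_flow_potential sol Eij) (f_flow_potential sols Eij).
by move: gap_lt; rewrite /potential_gap; lra.
Qed.

Lemma potential_gap_ge0 (T : {set V}) t :
  (forall x y, connect E x y) -> t \in T ->
  (forall t, t \in T -> pi t = pis t) ->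
  (forall i, i \notin T -> qs i <= q i) ->
  forall i, 0 <= potential_gap i.
Proof.
move=> E_conn tT piT qT.
have gap0 u : u \in T -> potential_gap u = 0.
  by move/piT; rewrite /potential_gap => ->; rewrite subrr.
have [x _ x_min] := arg_minP potential_gap (isT : predT t).
suff x_ge0 : 0 <= potential_gap x.
  by move=> i; exact: le_trans x_ge0 (x_min i isT).
rewrite leNgt; apply/negP => x_lt0.
pose S i := potential_gap i == potential_gap x.
have S_notT i : S i -> i \notin T.
  by move=> /eqP Si; apply/negP => /gap0 i0; move: x_lt0; rewrite -Si i0 ltxx.
have St : ~~ S t by apply: contraL tT; exact: S_notT.
have [a [b [Sa Sb Eab]]] :=
  connect_crossing_edge (S := S) (E_conn x t) (eqxx _) St.
have outflow_ge0 : 0 <= \sum_(i | S i) \sum_j flow_gap i j.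
  apply: sumr_ge0 => i Si; rewrite -production_gap subr_ge0; apply: qT.
  exact: S_notT.
have out_le0 i j : S i -> ~~ S j -> flow_gap i j <= 0.
  by move=> /eqP Si _; apply: flow_gap_le0; rewrite Si x_min.
have : \sum_(i | S i) \sum_(j | ~~ S j) flow_gap i j < 0.
  apply: (sumr_lt0_witness (a := a)) => // [i Si|].
    by apply: sumr_le0 => j; exact: out_le0.
  apply: (sumr_lt0_witness (a := b)) => // [j|]; first exact: out_le0.
  apply: flow_gap_lt0 => //; rewrite (eqP Sa) lt_neqAle x_min // andbT.
  by rewrite eq_sym.
by rewrite -antisym_outflow ?ltNge ?outflow_ge0 //; exact: flow_gap_antisym.
Qed.

End NetworkComparison.

Theorem corollary2 (R : realType) (V : finType) (E : rel V)
    (f : V -> V -> R -> R) (q qs : V -> R) (phi phis : V -> V -> R)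
    (pi pis : V -> R) (T : {set V}) :
  (forall i j, E i j = E j i) ->
  (forall x y, connect E x y) ->
  (forall i j, E i j -> continuous (f i j)) ->
  (forall i j, E i j -> forall x y : R, x < y -> f i j x < f i j y) ->
  (forall i j, E i j -> forall x : R, f i j x = - f j i (- x)) ->
  network_solution E f q phi pi ->
  network_solution E f qs phis pis ->
  (forall t, t \in T -> pi t = pis t) ->
  (forall i, i \notin T -> qs i <= q i) ->
  forall t, t \in T -> q t <= qs t.
Proof.
move=> E_sym E_conn _ f_incr _ sol sols piT qT t tT.
have gap_ge0 := potential_gap_ge0 E_sym f_incr sol sols E_conn tT piT qT.
rewrite -subr_le0 (production_gap E_sym sol sols).
apply: sumr_le0 => j _; apply: (flow_gap_le0 f_incr sol sols).
by rewrite /potential_gap (piT t tT) subrr gap_ge0.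
Qed.
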